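(* Let $X$ be a real Banach space, $k\in\mathbb N$, and $Y$ a proximinal closed subspace of $X$. Then $Y$ is a $k$-Chebyshev subspace of $X$ if and only if $\dim\big(\{S(X,y^\perp)-x\}\cap Y\big)<k$ for all $y^\perp\in S_{Y^\perp}$ and all $x\in S(X,y^\perp)$.
   Context: For $x^*\in X^*\setminus\{0\}$, $S(X,x^* )=\{x\in S_X:x^*(x)=\|x^*\|\}$, and $S(X,x^* )-x=\{z-x:z\in S(X,x^* )\}$. $Y^\perp=\{x^*\in X^*:x^*|_Y=0\}$ and $S_{Y^\perp}$ its unit sphere. For a set $A$ and $a\in A$, $\dim A=\dim\operatorname{span}(A-a)$. $Y$ is proximinal if $P_Y(x)=\{y\in Y:\|x-y\|=d(x,Y)\}\neq\emptyset$ for all $x\in X$; a proximinal $Y$ is $k$-Chebyshev if $\dim P_Y(x)\le k-1$ for all $x\in X$. *)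

(* a real Banach space is a completeNormedModType
   over an abstract R : realType. *)
From HB Require Import structures.
From mathcomp Require Import all_boot all_order all_algebra.
From mathcomp Require Import all_classical all_reals all_analysis.
Set Implicit Arguments. Unset Strict Implicit. Unset Printing Implicit Defensive.
Import Order.TTheory GRing.Theory Num.Theory.
Import numFieldNormedType.Exports.
Local Open Scope classical_set_scope.
Local Open Scope ring_scope.

Section Defs.
Context {R : realType} {X : normedModType R}.

Definition is_subspace (Y : set X) : Prop :=
  Y 0 /\ forall (a : R) (x y : X), Y x -> Y y -> Y (a *: x + y).

Definition is_linfun (f : X -> R) : Prop :=
  forall (a : R) (x y : X), f (a *: x + y) = a * f x + f y.

Definition in_dual (f : X -> R) : Prop := is_linfun f /\ continuous f.

Definition dual_norm (f : X -> R) : R :=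
  sup [set `|f x| | x in [set x : X | `|x| <= 1]].

Definition unit_sphere : set X := [set x | `|x| = 1].

Definition Sface (f : X -> R) : set X :=
  [set x | unit_sphere x /\ f x = dual_norm f].

Definition set_shift (A : set X) (x : X) : set X := [set z - x | z in A].

Definition annihilator (Y : set X) : set (X -> R) :=
  [set f | in_dual f /\ forall y, Y y -> f y = 0].

Definition annihilator_sphere (Y : set X) : set (X -> R) :=
  [set f | annihilator Y f /\ dual_norm f = 1].

Definition lspan (S : set X) : set X :=
  [set v | exists (n : nat) (c : 'I_n -> R) (u : 'I_n -> X),
      (forall i, S (u i)) /\ v = \sum_(i < n) c i *: u i].

Definition lin_indep (n : nat) (u : 'I_n -> X) : Prop :=
  forall c : 'I_n -> R, \sum_(i < n) c i *: u i = 0 -> forall i, c i = 0.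

(* dim V < k for the linear span V of S: every linearly independent finite
   family in V has fewer than k elements (covers infinite dimension). *)
Definition span_dim_lt (S : set X) (k : nat) : Prop :=
  forall (n : nat) (u : 'I_n -> X),
    (forall i, lspan S (u i)) -> lin_indep u -> (n < k)%N.

(* dim A := dim span(A - a) for a in A (independent of a) *)
Definition set_dim_lt (A : set X) (k : nat) : Prop :=
  forall a, A a -> span_dim_lt (set_shift A a) k.

Definition dist_to (Y : set X) (x : X) : R := inf [set `|x - y| | y in Y].

Definition metric_proj (Y : set X) (x : X) : set X :=
  [set y | Y y /\ `|x - y| = dist_to Y x].

Definition proximinal (Y : set X) : Prop :=
  forall x, metric_proj Y x !=set0.

(* k-Chebyshev: proximinal and dim P_Y(x) <= k - 1, i.e. dim P_Y(x) < k *)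
Definition k_Chebyshev (Y : set X) (k : nat) : Prop :=
  proximinal Y /\ forall x, set_dim_lt (metric_proj Y x) k.

End Defs.

(* If [g] is a norm-one functional vanishing on [Y] and [x] lies on the face
   [S(X,g)], then [d(x,Y) = 1], so [x - s] is a best approximation of [x] for
   every [s] of the face with [s - x] in [Y]: [(S(X,g) - x) ∩ Y] is, up to
   sign, part of a translate of [P_Y(x)].  Conversely, for [x] outside [Y] and
   [a ∈ P_Y(x)], Hahn-Banach gives a norm-one [g] vanishing on [Y] with
   [g x = ||x - a|| = d(x,Y)]; then [p |-> (x - p)/||x - a||] maps [P_Y(x)]
   into [S(X,g)] with differences in [Y], so [P_Y(x) - a] is a scaled copy of
   part of [(S(X,g) - x') ∩ Y], where [x' = (x - a)/||x - a||]. *)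
From HB Require Import structures.
From mathcomp Require Import all_boot all_order all_algebra.
From mathcomp Require Import all_classical all_reals all_analysis.
From mathcomp Require Import lra ring.
Set Implicit Arguments. Unset Strict Implicit. Unset Printing Implicit Defensive.
Import Order.TTheory GRing.Theory Num.Theory.
Import numFieldNormedType.Exports.
Local Open Scope classical_set_scope.
Local Open Scope ring_scope.

Section LinearAlgebra.
Context {R : realType} {X : normedModType R}.
Implicit Types (f : X -> R) (Y S T : set X).

Lemma linfun0 f : is_linfun f -> f 0 = 0.
Proof. by move=> lf; have := lf 1 0 0; rewrite scaler0 addr0 mul1r; lra. Qed.

Lemma linfunZ f : is_linfun f -> forall a x, f (a *: x) = a * f x.
Proof. by move=> lf a x; have := lf a x 0; rewrite addr0 (linfun0 lf) addr0. Qed.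

Lemma linfunD f : is_linfun f -> forall x y, f (x + y) = f x + f y.
Proof. by move=> lf x y; have := lf 1 x y; rewrite scale1r mul1r. Qed.

Lemma linfunB f : is_linfun f -> forall x y, f (x - y) = f x - f y.
Proof. by move=> lf x y; rewrite linfunD // -scaleN1r linfunZ //; lra. Qed.

Lemma subspace0 Y : is_subspace Y -> Y 0.
Proof. by case. Qed.

Lemma subspaceZ Y a x : is_subspace Y -> Y x -> Y (a *: x).
Proof. by move=> [Y0 HY] Yx; have := HY a x 0 Yx Y0; rewrite addr0. Qed.

Lemma subspaceD Y x y : is_subspace Y -> Y x -> Y y -> Y (x + y).
Proof. by move=> [_ HY] Yx Yy; have := HY 1 x y Yx Yy; rewrite scale1r. Qed.

Lemma subspaceN Y x : is_subspace Y -> Y x -> Y (- x).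
Proof. by move=> HY Yx; rewrite -scaleN1r; apply: subspaceZ. Qed.

Lemma subspaceB Y x y : is_subspace Y -> Y x -> Y y -> Y (x - y).
Proof. by move=> HY Yx Yy; apply: subspaceD => //; apply: subspaceN. Qed.

Lemma lspan_scale_sub S T (c : R) :
  S `<=` [set c *: t | t in T] -> lspan S `<=` lspan T.
Proof.
move=> ST _ [n [a [u [Su ->]]]].
have [w wP] : {w : 'I_n -> X & forall i, T (w i) /\ c *: w i = u i}.
  apply: (@choice _ _ (fun i t => T t /\ c *: t = u i)) => i.
  by have [t Tt ctu] := ST _ (Su i); exists t.
exists n, (fun i => a i * c), w; split; first by move=> i; case: (wP i).
by apply: eq_bigr => i _; case: (wP i) => _ <-; rewrite scalerA.
Qed.

Lemma span_dim_lt_sub S T k :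
  lspan S `<=` lspan T -> span_dim_lt T k -> span_dim_lt S k.
Proof. by move=> ST hT n u Su; apply: hT => i; apply/ST/Su. Qed.

Lemma span_dim_lt_zero S k : (0 < k)%N -> S `<=` [set 0] -> span_dim_lt S k.
Proof.
move=> k_gt0 S0 [//|n] u Su u_indep.
have u0 i : u i = 0.
  have [m [c [w [Sw ->]]]] := Su i.
  by apply: big1 => j _; rewrite (S0 _ (Sw j)) scaler0.
have := u_indep (fun=> 1); rewrite big1 => [/(_ erefl ord0)|i _].
  by move/eqP; rewrite oner_eq0.
by rewrite u0 scaler0.
Qed.

End LinearAlgebra.

Section DualNorm.
Context {R : realType} {X : normedModType R}.
Implicit Types (f : X -> R) (x v : X).

Lemma normZ_invnorm x : x != 0 -> `| `|x|^-1 *: x| = 1.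
Proof. by move=> x0; rewrite normrZ normfV normr_id mulVf ?normr_eq0. Qed.

Lemma in_dual_bounded f : in_dual f -> exists M, forall x, `|x| <= 1 -> `|f x| <= M.
Proof.
move=> [lf cf].
have := @cvgr_dist_lt _ _ _ (nbhs (0 : X)) (nbhs_filter 0) f (f 0) (cf 0) 1 ltr01.
rewrite (linfun0 lf) => /nbhs_normP[d /= d_gt0 fd].
have d2_gt0 : 0 < d / 2 by rewrite divr_gt0.
exists (2 / d) => x x_le1.
have : `|f ((d / 2) *: x)| < 1.
  have := fd ((d / 2) *: x); rewrite /= !sub0r !normrN; apply.
  rewrite normrZ gtr0_norm // (@le_lt_trans _ _ (d / 2)) //.
    by rewrite -[leRHS]mulr1 ler_wpM2l // ltW.
  by rewrite ltr_pdivrMr // ltr_pMr // ltr1n.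
rewrite linfunZ // normrM gtr0_norm // => h.
by rewrite ler_pdivlMr // mulrC; apply: ltW; lra.
Qed.

Lemma dual_norm_ge f x : in_dual f -> `|x| <= 1 -> `|f x| <= dual_norm f.
Proof.
move=> df x_le1; have [M fM] := in_dual_bounded df.
apply: ub_le_sup; last by exists x.
by exists M => _ [y y_le1 <-]; apply: fM.
Qed.

Lemma dual_normP f v : in_dual f -> `|f v| <= dual_norm f * `|v|.
Proof.
move=> df; have [->|v0] := eqVneq v 0.
  by rewrite (linfun0 df.1) !normr0 mulr0.
have v_gt0 : 0 < `|v| by rewrite normr_gt0.
have := @dual_norm_ge f (`|v|^-1 *: v) df.
rewrite normZ_invnorm // lexx => /(_ isT).
by rewrite (linfunZ df.1) normrM normfV normr_id ler_pdivrMl // mulrC.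
Qed.

Lemma dual_norm_eq1 f v : (forall x, `|f x| <= `|x|) -> `|v| = 1 -> f v = 1 ->
  dual_norm f = 1.
Proof.
move=> f_le v1 fv1; apply/eqP; rewrite eq_le; apply/andP; split.
  apply: ge_sup; first by exists `|f v|, v => //=; rewrite v1.
  by move=> _ [y y_le1 <-]; apply: le_trans (f_le y) y_le1.
have -> : 1 = `|f v| by rewrite fv1 normr1.
apply: ub_le_sup; last by exists v => //=; rewrite v1.
by exists 1 => _ [y y_le1 <-]; apply: le_trans (f_le y) y_le1.
Qed.

Lemma linfun_contraction_continuous f :
  is_linfun f -> (forall x, `|f x| <= `|x|) -> continuous f.
Proof.
move=> lf f_le x; apply/cvgrPdist_lt => e e_gt0; near=> y.
rewrite -linfunB //; apply: le_lt_trans (f_le _) _.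
near: y; exact: (@cvgr_dist_lt _ _ _ (nbhs x) (nbhs_filter x) id x cvg_id e e_gt0).
Unshelve. all: by end_near.
Qed.

End DualNorm.

Section HahnBanach.
Context {R : realType} {X : normedModType R}.
Implicit Types (G : set (X * R)) (u v w : X) (r s c : R).

(* A linear functional on a subspace, dominated by the norm, is encoded by its
   graph, so that Zorn's lemma can be applied to sets of pairs. *)
Definition dominated_graph G : Prop :=
  [/\ G (0, 0),
      (forall v r s, G (v, r) -> G (v, s) -> r = s),
      (forall a u v r s, G (u, r) -> G (v, s) -> G (a *: u + v, a * r + s)) &
      (forall v r, G (v, r) -> r <= `|v|)].

Lemma dominated_graphZ G a u r : dominated_graph G -> G (u, r) -> G (a *: u, a * r).
Proof. by case=> G0 _ Glin _ Gu; have := Glin a u 0 r 0 Gu G0; rewrite !addr0. Qed.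

Lemma dominated_graph_directed H : H (0, 0) ->
  (forall p q, H p -> H q -> exists G, [/\ dominated_graph G, G `<=` H, G p & G q]) ->
  dominated_graph H.
Proof.
move=> H0 directed; split => //.
- move=> v r s Hr Hs; have [G [[_ Gfun _ _] _ Gr Gs]] := directed _ _ Hr Hs.
  exact: Gfun Gr Gs.
- move=> a u v r s Hr Hs; have [G [[_ _ Glin _] GH Gr Gs]] := directed _ _ Hr Hs.
  exact/GH/Glin.
- by move=> v r Hr; have [G [[_ _ _ Gdom] _ Gr _]] := directed _ _ Hr Hr; apply: Gdom.
Qed.

Definition graph_adjoin G v c : set (X * R) :=
  [set p | exists u r t, G (u, r) /\ p = (u + t *: v, r + t * c)].

Lemma sub_graph_adjoin G v c : G `<=` graph_adjoin G v c.
Proof. by case=> u r Gu; exists u, r, 0; rewrite scale0r mul0r !addr0. Qed.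

Lemma graph_adjoin_new G v c : G (0, 0) -> graph_adjoin G v c (v, c).
Proof. by move=> G0; exists 0, 0, 1; rewrite scale1r mul1r !add0r. Qed.

Lemma dominated_graph_adjoin G v c : dominated_graph G -> (forall r, ~ G (v, r)) ->
  (forall u r, G (u, r) -> r - `|u - v| <= c <= `|u + v| - r) ->
  dominated_graph (graph_adjoin G v c).
Proof.
move=> domG v_new c_bnd; case: (domG) => G0 Gfun Glin Gdom; split.
- exact: sub_graph_adjoin.
- move=> _ _ _ [u [r [t [Gu [-> ->]]]]] [u' [r' [t' [Gu' [Eu ->]]]]].
  have [tt'|tt'] := eqVneq t t'.
    by move: Eu Gu'; rewrite -tt' => /addIr <- Gu'; rewrite (Gfun _ _ _ Gu Gu').
  have Ev : (t - t') *: v = u' - u.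
    by rewrite scalerBl -[t *: v](addKr u) Eu addrA addrK addrC.
  have Gdiff : G (u' - u, r' - r).
    by have := Glin (-1) u u' r r' Gu Gu'; rewrite scaleN1r mulN1r !(addrC (- _)).
  case: (v_new ((t - t')^-1 * (r' - r))).
  have -> : v = (t - t')^-1 *: (u' - u) by rewrite -Ev scalerA mulVf ?subr_eq0 ?scale1r.
  exact: dominated_graphZ domG Gdiff.
- move=> a _ _ _ _ [u [r [t [Gu [-> ->]]]]] [u' [r' [t' [Gu' [-> ->]]]]].
  exists (a *: u + u'), (a * r + r'), (a * t + t'); split; first exact: Glin.
  congr pair; last by ring.
  by rewrite scalerDr scalerA scalerDl addrACA.
- move=> _ _ [u [r [t [Gu [-> ->]]]]].
  (* [u + t v = |t| (u / |t| +- v)]; apply the bounds on [c] at [u / |t|]. *)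
  have [t_lt0|t_gt0|->] := ltgtP t 0; last by rewrite scale0r mul0r !addr0; exact: Gdom.
  + have nt_gt0 : 0 < - t by rewrite oppr_gt0.
    have /andP[+ _] := c_bnd _ _ (dominated_graphZ (- t)^-1 domG Gu) => h.
    have -> : u + t *: v = (- t) *: ((- t)^-1 *: u - v).
      by rewrite scalerBr scalerA mulfV ?gt_eqF // scale1r scaleNr opprK.
    rewrite normrZ gtr0_norm //.
    have := ler_wpM2l (ltW nt_gt0) h.
    rewrite mulrBr mulrA mulfV ?gt_eqF // mul1r; lra.
  + have /andP[_ +] := c_bnd _ _ (dominated_graphZ t^-1 domG Gu) => h.
    have -> : u + t *: v = t *: (t^-1 *: u + v).
      by rewrite scalerDr scalerA mulfV ?gt_eqF // scale1r.
    rewrite normrZ gtr0_norm //.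
    have := ler_wpM2l (ltW t_gt0) h.
    rewrite mulrBr mulrA mulfV ?gt_eqF // mul1r; lra.
Qed.

Lemma dominated_graph_extend G v : dominated_graph G -> (forall r, ~ G (v, r)) ->
  exists c, dominated_graph (graph_adjoin G v c).
Proof.
move=> domG v_new; case: (domG) => G0 _ Glin Gdom.
pose A := [set z | exists u r, G (u, r) /\ z = r - `|u - v|].
have A_le u r w s : G (u, r) -> G (w, s) -> r - `|u - v| <= `|w + v| - s.
  move=> Gu Gw; have := Gdom _ _ (Glin 1 u w r s Gu Gw).
  have := ler_normD (u - v) (w + v).
  rewrite scale1r mul1r addrCA subrK addrC; lra.
have A_ub w s : G (w, s) -> ubound A (`|w + v| - s).
  by move=> Gw _ [u [r [Gu ->]]]; exact: A_le.
exists (sup A); apply: dominated_graph_adjoin => // u r Gu; apply/andP; split.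
  by apply: ub_le_sup; [exists (`|0 + v| - 0); exact: A_ub | exists u, r].
by apply: ge_sup; [exists (0 - `|0 - v|), 0, 0 | exact: A_ub].
Qed.

(* Zorn's lemma is applied to the sets [G] with [G `|` G0] dominated, so that
   the union of the empty chain is admissible as well. *)
Lemma hahn_banach G0 : dominated_graph G0 ->
  exists F : X -> R, [/\ is_linfun F, (forall v, `|F v| <= `|v|) &
                        forall v r, G0 (v, r) -> F v = r].
Proof.
move=> domG0.
pose P G := dominated_graph (G `|` G0).
have [A [domA Amax]] : exists A, P A /\ forall B, A `<` B -> ~ P B.
  apply: Zorn_bigcup => C domC Ctot.
  apply: dominated_graph_directed; first by right; case: domG0.
  have C_sub G : C G -> G `|` G0 `<=` (\bigcup_(G in C) G) `|` G0.
    by move=> CG z [Gz|G0z]; [left; exists G|right].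
  move=> p q [[Gp Cp pGp]|G0p] [[Gq Cq qGq]|G0q].
  - have [GpGq|GqGp] := Ctot _ _ Cp Cq.
      by exists (Gq `|` G0); split; [exact: domC|exact: C_sub|left; apply: GpGq|left].
    by exists (Gp `|` G0); split; [exact: domC|exact: C_sub|left|left; apply: GqGp].
  - by exists (Gp `|` G0); split; [exact: domC|exact: C_sub|left|right].
  - by exists (Gq `|` G0); split; [exact: domC|exact: C_sub|right|left].
  - by exists G0; split => // z; right.
pose H := A `|` G0.
case: (domA) => H0 Hfun Hlin Hdom.
have H_total v : exists r, H (v, r).
  apply: contrapT => H_v; have v_new r : ~ H (v, r) by move=> Hv; apply: H_v; exists r.
  have [c domHc] := dominated_graph_extend domA v_new.
  apply: (Amax (graph_adjoin H v c)).
    split; first by move=> z Az; apply: sub_graph_adjoin; left.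
    move=> /(_ _ (graph_adjoin_new v c H0)) Av; apply: (v_new c); by left.
  rewrite /P; suff -> : graph_adjoin H v c `|` G0 = graph_adjoin H v c by [].
  by apply/setUidPl => z G0z; apply: sub_graph_adjoin; right.
have [F HF] : {F : X -> R & forall v, H (v, F v)}.
  exact: (@choice _ _ (fun v r => H (v, r))).
exists F; split.
- by move=> a x y; apply: Hfun (HF _) (Hlin a x y _ _ (HF x) (HF y)).
- move=> v; rewrite ler_norml (Hdom _ _ (HF v)) andbT.
  have := Hdom _ _ (dominated_graphZ (-1) domA (HF v)).
  by rewrite scaleN1r normrN mulN1r lerNl.
- by move=> v r G0v; apply: Hfun (HF v) _; right.
Qed.

End HahnBanach.

Section MetricProjection.
Context {R : realType} {X : normedModType R}.
Variable Y : set X.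
Hypothesis Ysub : is_subspace Y.
Implicit Types (g : X -> R) (x a p s : X).

Lemma dist_to_le x y : Y y -> dist_to Y x <= `|x - y|.
Proof. by move=> Yy; apply: ge_inf; [exists 0 => _ [z _ <-] | exists y]. Qed.

Lemma metric_proj_mem x p : Y x -> metric_proj Y x p -> p = x.
Proof.
move=> Yx [_ xp]; have := dist_to_le x Yx.
by rewrite subrr normr0 -xp normr_le0 subr_eq0 => /eqP.
Qed.

Lemma dist_to_Sface g x : annihilator_sphere Y g -> Sface g x -> dist_to Y x = 1.
Proof.
move=> [[gdual gY] g1] [x1 gx]; apply/eqP; rewrite eq_le; apply/andP; split.
  by have := dist_to_le x (subspace0 Ysub); rewrite /= subr0 x1.
apply: lb_le_inf; first by exists `|x - 0|, 0 => //; exact: subspace0.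
move=> _ [y Yy <-]; have := dual_normP (x - y) gdual.
rewrite g1 mul1r (linfunB gdual.1) (gY y Yy) subr0 gx g1.
exact: le_trans (ler_norm _).
Qed.

Lemma metric_proj_Sface g x s : annihilator_sphere Y g -> Sface g x ->
  Sface g s -> Y (s - x) -> metric_proj Y x (x - s).
Proof.
move=> gY xS [s1 _] Ysx; split; first by rewrite -opprB; exact: subspaceN.
by rewrite subKr (dist_to_Sface gY xS).
Qed.

Lemma set_dim_Sface_shift k g x : (forall x, set_dim_lt (metric_proj Y x) k) ->
  annihilator_sphere Y g -> Sface g x ->
  set_dim_lt (set_shift (Sface g) x `&` Y) k.
Proof.
move=> PY_dim gY xS _ [[s sS <-] Ysx].
have Ps := metric_proj_Sface gY xS sS Ysx.
apply: span_dim_lt_sub (PY_dim x _ Ps); apply: (@lspan_scale_sub _ _ _ _ (-1)).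
move=> _ [_ [[s' s'S <-] Ys'x] <-].
exists ((x - s') - (x - s)).
  by exists (x - s') => //; exact: metric_proj_Sface gY xS s'S Ys'x.
by rewrite scaleN1r opprB -(opprB x s') -(opprB x s) opprK addrC.
Qed.

Lemma Sface_normalize g x p : is_linfun g -> dual_norm g = 1 -> g p = 0 ->
  g x = `|x - p| -> x != p -> Sface g (`|x - p|^-1 *: (x - p)).
Proof.
move=> glin g1 gp gx xp; have xp0 : x - p != 0 by rewrite subr_eq0.
split; first exact: normZ_invnorm.
by rewrite g1 (linfunZ glin) (linfunB glin) gp subr0 gx mulVf ?normr_eq0.
Qed.

Lemma norming_annihilator x a : ~ Y x -> metric_proj Y x a ->
  exists g, annihilator_sphere Y g /\ g x = `|x - a|.
Proof.
move=> Yx [Ya xa_dist]; set d := `|x - a|.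
have xa0 : x - a != 0 by rewrite subr_eq0; apply: contraPneq Yx => ->.
have d_gt0 : 0 < d by rewrite normr_gt0.
pose G := [set p : X * R | Y p.1 /\ p.2 = 0].
have G0 : G (0, 0) by split => //; exact: subspace0.
have domG : dominated_graph G.
  split => //; first by move=> v r s [_ /= ->] [_ /= ->].
    move=> c u v r s [/= Yu ->] [/= Yv ->]; split; last by rewrite /= mulr0 addr0.
    by case: Ysub => _; apply.
  by move=> v r [_ /= ->].
have domGx : dominated_graph (graph_adjoin G x d).
  apply: dominated_graph_adjoin => // [r [/= Yx' _] //|u r [/= Yu ->]].
  rewrite sub0r subr0; apply/andP; split.
    by rewrite (le_trans _ (ltW d_gt0)) // oppr_le0.
  rewrite /d xa_dist -[u]opprK addrC; exact: dist_to_le (subspaceN Ysub Yu).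
have [F [Flin F_le FG]] := hahn_banach domGx.
have FY y : Y y -> F y = 0 by move=> Yy; apply: FG; apply: sub_graph_adjoin.
have Fx : F x = d by apply: FG; exact: graph_adjoin_new.
have F1 : dual_norm F = 1.
  apply: dual_norm_eq1 F_le (normZ_invnorm xa0) _.
  by rewrite (linfunZ Flin) (linfunB Flin) (FY a Ya) subr0 Fx mulVf ?normr_eq0.
exists F; split => //; split => //; split => //; split => //.
exact: linfun_contraction_continuous.
Qed.

Lemma set_dim_metric_proj k x : (0 < k)%N ->
  (forall g x, annihilator_sphere Y g -> Sface g x ->
     set_dim_lt (set_shift (Sface g) x `&` Y) k) ->
  set_dim_lt (metric_proj Y x) k.
Proof.
move=> k_gt0 Sface_dim a Pa.
have [Yx|Yx] := pselect (Y x).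
  apply: span_dim_lt_zero => // _ [p Pp <-].
  by rewrite (metric_proj_mem Yx Pp) (metric_proj_mem Yx Pa) subrr.
have [g [gY gx]] := norming_annihilator Yx Pa.
have [[[glin _] gY0] g1] := gY.
case: (Pa) => Ya xa_dist; set d := `|x - a| in gx xa_dist *.
have d_gt0 : 0 < d by rewrite normr_gt0 subr_eq0; apply: contraPneq Yx => ->.
have PS p : metric_proj Y x p -> Sface g (d^-1 *: (x - p)).
  move=> [Yp xp_dist]; have xp_d : `|x - p| = d by rewrite xp_dist.
  rewrite -xp_d; apply: Sface_normalize => //; first exact: gY0.
    by rewrite gx xp_d.
  by apply: contraPneq Yx => ->.
have zero_in : (set_shift (Sface g) (d^-1 *: (x - a)) `&` Y) 0.
  by split; [exists (d^-1 *: (x - a)); [exact: PS | exact: subrr] | exact: subspace0].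
apply: span_dim_lt_sub (Sface_dim g _ gY (PS a Pa) 0 zero_in).
apply: (@lspan_scale_sub _ _ _ _ (- d)) => _ [p Pp <-].
exists (d^-1 *: (a - p)); last by rewrite scalerA mulNr mulfV ?gt_eqF // scaleN1r opprB.
exists (d^-1 *: (a - p)); last exact: subr0.
split; last by apply: subspaceZ => //; apply: subspaceB => //; case: Pp.
exists (d^-1 *: (x - p)); first exact: PS.
by rewrite -scalerBr opprB addrC addrA subrK.
Qed.

End MetricProjection.

Unset Implicit Arguments.

Theorem theorem4p4 (R : realType) (X : completeNormedModType R) (k : nat)
  (Y : set X) :
  (1 <= k)%N -> is_subspace Y -> closed Y -> proximinal Y ->
  (k_Chebyshev Y k <->
   (forall (g : X -> R) (x : X), annihilator_sphere Y g -> Sface g x ->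
      set_dim_lt (set_shift (Sface g) x `&` Y) k)).
Proof.
move=> k_gt0 Ysub _ Yprox; split.
  by move=> [_ PY_dim] g x; apply: set_dim_Sface_shift.
by move=> Sface_dim; split=> // x; apply: set_dim_metric_proj.
Qed.
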